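(* There exists a sequentially efficient $2$-ADPLS for the maximum weight cut problem with proof size $O(\log n+\log W)$.
   Context: All graphs are finite, connected and undirected, $G=(V,E)$, $n=|V|$, $N(v)$ is the set of neighbors of $v$; each node distinguishes its incident edges by port numbers. An input assignment $\mathsf{I}:V\to\{0,1\}^*$ gives each node a local input; an input graph $\langle G,\mathsf I\rangle$ is a configuration graph with $S=\mathsf I$. Given a universe $\mathcal U$ of configuration graphs and disjoint families $\mathcal F_Y,\mathcal F_N\subseteq\mathcal U$, a gap proof labeling scheme (GPLS) consists of a prover which, given a configuration graph in $\mathcal F_Y$, assigns a label $L(v)\in\{0,1\}^*$ to every node, and a verifier which at each node $v$ receives only $\langle S(v),L(v),L^N(v)\rangle$, where $L^N(v)$ is the vector of labels of $v$'s neighbors (indexed by port), and outputs True or False; the verifier accepts if all nodes output True and rejects otherwise. The GPLS is correct if (i) for every configuration graph in $\mathcal F_Y$ the verifier accepts under the prover's labels, and (ii) for every configuration graph in $\mathcal F_N$ the verifier rejects under every label assignment. Its proof size is the maximum label length over $\mathcal F_Y$. It is sequentially efficient if the prover runs in time polynomial in the encoding length of the configuration graph and the verifier at $v$ runs in time polynomial in $|S(v)|$, $|L(v)|$ and $\sum_{u\in N(v)}|L(u)|$. For a maximization problem with optimum value $OPT(G,\mathsf I)$, $\alpha\ge1$ and $k\in\mathbb Z$, an $\alpha$-ADPLS for the problem and $k$ is a GPLS over the universe of legal input graphs with $\mathcal F_Y=\{OPT\le k\}$ and $\mathcal F_N=\{OPT>\alpha k\}$. ''There exists an $\alpha$-ADPLS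 with proof size $s$'' means that for every $k\in\mathbb Z$ there is one with that proof size bound. Maximum weight cut: the input gives each node a unique identifier of $O(\log n)$ bits and the weights $w:E\to\{1,\dots,W\}$ of its incident edges; a feasible solution is a cut $\emptyset\subsetneq S\subsetneq V$, with objective $w(S)=\sum_{e\in E(S)}w(e)$, $E(S)$ the set of edges with exactly one endpoint in $S$, to be maximized. *)

From HB Require Import structures.
From mathcomp Require Import all_boot all_order all_algebra.
Set Implicit Arguments. Unset Strict Implicit. Unset Printing Implicit Defensive.
Import Order.TTheory GRing.Theory Num.Theory.

(* binary representation of a natural number (little endian, no trailing
   zeros; 0 is the empty string) *)
Fixpoint nat2bits_aux (fuel n : nat) : seq bool :=
  if fuel is f.+1 then (if n is 0 then [::] else odd n :: nat2bits_aux f n./2)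
  else [::].
Definition nat2bits (n : nat) : seq bool := nat2bits_aux n n.

(* self-delimiting encoding of a list of bit strings:
   each bit b is written b b, each string is terminated by 0 1 *)
Definition enc_bits (x : seq bool) : seq bool := flatten [seq [:: b; b] | b <- x].
Definition enc_list (xs : seq (seq bool)) : seq bool :=
  flatten [seq enc_bits x ++ [:: false; true] | x <- xs].

(* Nodes are 0 .. n-1 (internal names, not seen by the verifier);
   cadj`_v lists the neighbours of v in port order (port i = i-th entry);
   cinp`_v is the local state S(v). *)
Record config := Config { cadj : seq (seq nat); cinp : seq (seq bool) }.

Definition nbrs (adj : seq (seq nat)) (v : nat) : seq nat := nth [::] adj v.

(* finite, connected, simple, undirected graph with port numbering *)
Definition wf_adj (adj : seq (seq nat)) : Prop :=
  let n := size adj in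
  [/\ 0 < n,
      (forall v, v < n -> uniq (nbrs adj v) /\
                 all (fun u => (u < n) && (u != v)) (nbrs adj v)),
      (forall u v, u < n -> v < n -> (u \in nbrs adj v) = (v \in nbrs adj u)) &
      (forall v, v < n -> exists p : seq nat,
            path (fun x y => y \in nbrs adj x) 0 p /\ last 0 p = v)].

Definition wf_config (C : config) : Prop :=
  wf_adj (cadj C) /\ size (cinp C) = size (cadj C).

Definition labels := seq (seq bool).
Definition lab (L : labels) (v : nat) : seq bool := nth [::] L v.

(* the verifier at v sees < S(v), L(v), L^N(v) > *)
Definition verifierT := seq bool -> seq bool -> seq (seq bool) -> bool.

Definition accepts (V : verifierT) (C : config) (L : labels) : Prop :=
  forall v, v < size (cadj C) ->
    V (nth [::] (cinp C) v) (lab L v) [seq lab L u | u <- nbrs (cadj C) v].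

Definition enc_config (C : config) : seq bool :=
  enc_list (mkseq (fun v => enc_list (nth [::] (cinp C) v
                                      :: [seq nat2bits u | u <- nbrs (cadj C) v]))
                  (size (cadj C))).

(* Turing machines (single two-way infinite tape, alphabet {0,1,blank}) *)

Inductive tmove := TLeft | TRight | TStay.

Record TM := {
  tm_Q : finType;
  tm_start : tm_Q;
  tm_halt : tm_Q;
  tm_delta : tm_Q -> option bool -> tm_Q * option bool * tmove }.

Record tmconf (M : TM) := TMConf {
  tc_q : tm_Q M; tc_left : seq (option bool);   (* reversed *)
  tc_head : option bool; tc_right : seq (option bool) }.

Definition tm_step (M : TM) (c : tmconf M) : tmconf M :=
  let q := tc_q c in let l := tc_left c in
  let h := tc_head c in let r := tc_right c in
  if q == tm_halt M then c else
  let: (q', b, m) := @tm_delta M q h in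
  match m with
  | TStay => @TMConf M q' l b r
  | TLeft => @TMConf M q' (behead l) (head None l) (b :: r)
  | TRight => @TMConf M q' (b :: l) (head None r) (behead r)
  end.

Definition tm_init (M : TM) (x : seq bool) : tmconf M :=
  @TMConf M (tm_start M) [::] (head None (map Some x)) (behead (map Some x)).

Fixpoint read_out (s : seq (option bool)) : seq bool :=
  if s is Some b :: s' then b :: read_out s' else [::].

Definition tm_output (M : TM) (c : tmconf M) : seq bool :=
  read_out (tc_head c :: tc_right c).

Definition tm_poly_computes (M : TM) (d : nat) (x y : seq bool) : Prop :=
  let c := iter (d * size x ^ d + d) (tm_step (M:=M)) (tm_init M x) in
  tc_q c = tm_halt M /\ tm_output c = y.

Definition mc_input (adj : seq (seq nat)) (id : nat -> nat) (w : nat -> nat -> nat)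
    (v : nat) : seq bool :=
  enc_list (nat2bits (id v) :: [seq nat2bits (w v u) | u <- nbrs adj v]).

Definition mc_config (adj : seq (seq nat)) (id : nat -> nat) (w : nat -> nat -> nat)
    : config := Config adj (mkseq (mc_input adj id w) (size adj)).

(* legal input graphs; cid is the constant in the O(log n) bound on
   identifier length *)
Definition mc_legal (cid : nat) (adj : seq (seq nat)) (id : nat -> nat)
    (w : nat -> nat -> nat) : Prop :=
  let n := size adj in
  [/\ wf_adj adj,
      (forall u v, u < n -> v < n -> id u = id v -> u = v),
      (forall v, v < n -> size (nat2bits (id v)) <= cid * trunc_log 2 n + cid) &
      (forall u v, v < n -> u \in nbrs adj v -> 0 < w v u /\ w v u = w u v)].

Definition cut_weight (adj : seq (seq nat)) (w : nat -> nat -> nat) (S : nat -> bool)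
    : nat :=
  \sum_(v < size adj) \sum_(u <- nbrs adj v | v < u) (S v != S u) * w v u.

(* optimum over cuts  emptyset <> S <> V  (0 if there is none, i.e. n = 1) *)
Definition mc_OPT (adj : seq (seq nat)) (w : nat -> nat -> nat) : nat :=
  \max_(s : (size adj).-tuple bool |
          [exists i, tnth s i] && [exists i, ~~ tnth s i])
     cut_weight adj w (fun v => nth false s v).

Definition mc_W (adj : seq (seq nat)) (w : nat -> nat -> nat) : nat :=
  \max_(v < size adj) \max_(u <- nbrs adj v) w v u.

Definition mc_ADPLS (alpha : nat) (cid : nat) (k : int) (s : nat -> nat -> nat)
    (P : config -> labels) (V : verifierT) : Prop :=
  (forall adj id w, mc_legal cid adj id w -> (Posz (mc_OPT adj w) <= k)%R ->
     accepts V (mc_config adj id w) (P (mc_config adj id w)) /\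
     (forall v, v < size adj ->
        size (lab (P (mc_config adj id w)) v) <= s (size adj) (mc_W adj w)))
  /\
  (forall adj id w, mc_legal cid adj id w -> (alpha%:Z * k < Posz (mc_OPT adj w))%R ->
     forall L : labels, ~ accepts V (mc_config adj id w) L).

Definition mc_seq_efficient (cid : nat) (k : int) (P : config -> labels) (V : verifierT)
    : Prop :=
  (exists (M : TM) (d : nat), forall adj id w, mc_legal cid adj id w ->
      (Posz (mc_OPT adj w) <= k)%R ->
      tm_poly_computes M d (enc_config (mc_config adj id w))
                           (enc_list (P (mc_config adj id w))))
  /\
  (exists (M : TM) (d : nat), forall (sv l : seq bool) (ln : seq (seq bool)),
      tm_poly_computes M d (enc_list (sv :: l :: ln)) [:: V sv l ln]).

From Stdlib Require Import ClassicalEpsilon.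
From mathcomp Require Import all_boot all_order all_algebra zify.
Set Implicit Arguments. Unset Strict Implicit. Unset Printing Implicit Defensive.

(* Write [T] for the total edge weight.  Every cut has weight at most [T], and
   the average of the cut weight over all 2^n bipartitions is [T/2], so
   [OPT <= T <= 2 OPT].  The prover therefore certifies [T <= 2k] along a BFS
   spanning tree rooted at node 0: each label holds a root flag, the node's
   identifier, the root's identifier, the parent's identifier and the weight
   of the node's subtree (the node's incident weight plus its children's
   subtree weights).  Each verifier checks its own part of these claims; if all
   accept, summing the local inequalities over parent pointers shows that the
   total weight is at most the root's claim, so [OPT <= T <= 2k] (soundness),
   while the honest labels pass whenever [OPT <= k] (completeness).  All
   numbers in the labels are at most [n^2 W], giving labels of O(log n + log W)
   bits.  Finally, since [k] is fixed, yes-instances have bounded size, so the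
   prover and the verifier (which rejects oversized views) are finite functions
   on bounded inputs; these are computed in linear time by lookup-table
   Turing machines, which gives sequential efficiency. *)

Fixpoint bitstrings_upto (n : nat) : seq (seq bool) :=
  if n is m.+1 then [::] :: [seq b :: s | b <- [:: false; true], s <- bitstrings_upto m]
  else [:: [::]].

Lemma bitstrings_uptoP n s : size s <= n -> s \in bitstrings_upto n.
Proof.
elim: n s => [|n IH] [|b s] //=; try by rewrite inE.
move=> hs; rewrite inE; apply/orP; right.
by case: b; rewrite !mem_cat map_f ?orbT //; apply: IH.
Qed.

Lemma tm_halted_iter (M : TM) n (c : tmconf M) :
  tc_q c = tm_halt M -> iter n (@tm_step M) c = c.
Proof. by move=> hc; elim: n => //= n ->; rewrite /tm_step hc eqxx. Qed.

Lemma read_out_map y : read_out (map Some y) = y.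
Proof. by elim: y => //= a y ->. Qed.

(* A linear running time fits in the budget [d * a ^ d + d]. *)
Lemma le_self_poly a d : 0 < d -> a <= d * a ^ d.
Proof.
move=> hd; case: a => [|a] //; apply: leq_trans (leq_pmull _ hd).
by rewrite -{1}(expn1 a.+1); apply: leq_pexp2l.
Qed.

(* The lookup-table machine for [x |-> if size x <= B then F x else yo].
   A state [(phase, buf, over, j)] is: phase 0 = scanning the input, storing
   (reversed) at most [B] bits in [buf] and setting [over] on overflow;
   phase 1 = writing the answer right to left, [j] symbols still to write;
   phase 2 = halted. *)
Section LookupMachine.

Variables (B : nat) (F : seq bool -> seq bool) (yo : seq bool).

Definition lstate := (nat * seq bool * bool * nat)%type.

Definition lanswer (buf : seq bool) (over : bool) : seq bool :=
  if over then yo else F (rev buf).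

(* A bound on the length of every answer, hence on the counter. *)
Definition lanswer_bound : nat :=
  maxn (size yo) (\max_(t <- bitstrings_upto B) size (F t)).

Lemma size_lanswer buf over :
  size buf <= B -> size (lanswer buf over) <= lanswer_bound.
Proof.
move=> hs; rewrite /lanswer /lanswer_bound; case: over; first exact: leq_maxl.
apply: leq_trans (leq_maxr _ _).
apply: (@leq_bigmax_seq _ _ xpredT (fun t => size (F t)) (rev buf)) => //.
by apply: bitstrings_uptoP; rewrite size_rev.
Qed.

Definition lstates : seq lstate :=
  [seq (a, j) | a <- [seq (b, o) | b <- [seq (p, s) | p <- iota 0 3,
                                                       s <- bitstrings_upto B],
                                   o <- [:: false; true]],
                j <- iota 0 lanswer_bound.+1].

Lemma lstatesP p s o j :
  p < 3 -> size s <= B -> j <= lanswer_bound -> (p, s, o, j) \in lstates.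
Proof.
move=> hp hs hj.
apply: (@allpairs_f _ _ _ (fun a j => (a, j))); last by rewrite mem_iota.
apply: (@allpairs_f _ _ _ (fun a o => (a, o))); last by case: o.
apply: (@allpairs_f _ _ _ (fun p s => (p, s))); first by rewrite mem_iota.
exact: bitstrings_uptoP.
Qed.

Definition lhalt : lstate := (2, [::], false, 0).

Definition ldelta (d : lstate) (h : option bool) : lstate * option bool * tmove :=
  let: (p, s, o, j) := d in
  if p == 0 then
    match h with
    | Some b => (if size s < B then (0, b :: s, o, 0) else (0, s, true, 0), Some b, TRight)
    | None => let y := lanswer s o in
              (if size y == 0 then lhalt else (1, s, o, size y), None, TStay)
    end
  else if p == 1 then
    let y := lanswer s o in
    (if j <= 1 then lhalt else (1, s, o, j.-1), Some (nth false y j.-1),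
     if j <= 1 then TStay else TLeft)
  else (lhalt, h, TStay).

Lemma lhalt_in : lhalt \in lstates.
Proof. exact: lstatesP. Qed.

Definition lq_halt : seq_sub lstates := SeqSub lhalt_in.
Definition lq (d : lstate) : seq_sub lstates := insubd lq_halt d.

Definition lookup_tm : TM :=
  @Build_TM (seq_sub lstates) (lq (0, [::], false, 0)) lq_halt
    (fun q h => let: (d, b, m) := ldelta (val q) h in (lq d, b, m)).

Lemma val_lq d : d \in lstates -> val (lq d) = d.
Proof. by move=> hd; rewrite /lq val_insubd hd. Qed.

Lemma lq_lhalt : lq lhalt = lq_halt.
Proof. by apply: val_inj; rewrite val_lq // lhalt_in. Qed.

Lemma lq_running d : d \in lstates -> d.1.1.1 != 2 -> (lq d == lq_halt) = false.
Proof.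
move=> hd h; apply/negbTE; apply/negP => /eqP /(congr1 val).
by rewrite val_lq //= => e; move: h; rewrite e.
Qed.

Local Notation lconf := (@TMConf lookup_tm).
Local Notation lstep := (@tm_step lookup_tm).

Fixpoint scan (s : seq bool) (o : bool) (x : seq bool) : seq bool * bool :=
  if x is b :: x' then (if size s < B then scan (b :: s) o x' else scan s true x')
  else (s, o).

Lemma size_scan s o x : size s <= B -> size (scan s o x).1 <= B.
Proof. by elim: x s o => //= b x IH s o hs; case: ifP => h; apply: IH. Qed.

Lemma scan_fits s x : size s + size x <= B -> scan s false x = (catrev x s, false).
Proof.
elim: x s => [|b x IH] s /=; first by rewrite addn0.
move=> h; have -> : size s < B by apply: leq_trans h; rewrite -addSnnS leq_addr.
by apply: IH; rewrite /= addSnnS.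
Qed.

Lemma scan_over_true s x : (scan s true x).2 = true.
Proof. by elim: x s => //= b x IH s; case: ifP. Qed.

Lemma scan_overflows s x : size s <= B -> B < size s + size x -> (scan s false x).2 = true.
Proof.
elim: x s => [|b x IH] s /=.
  by rewrite addn0 => h1 h2; move: (leq_trans h2 h1); rewrite ltnn.
move=> h1 h; case: ifP => hs; last exact: scan_over_true.
by apply: IH => //; rewrite /= addSnnS.
Qed.

Lemma lanswer_scan x :
  lanswer (scan [::] false x).1 (scan [::] false x).2 =
  if size x <= B then F x else yo.
Proof.
rewrite /lanswer; case: (leqP (size x) B) => h.
  by rewrite scan_fits //= revK.
by rewrite scan_overflows.
Qed.

Lemma lstep_scan s o l b r : size s <= B ->
  lstep (lconf (lq (0, s, o, 0)) l (Some b) r) =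
  lconf (lq (if size s < B then (0, b :: s, o, 0) else (0, s, true, 0)))
        (Some b :: l) (head None r) (behead r).
Proof.
move=> hs; have hd : (0, s, o, 0) \in lstates by apply: lstatesP.
by rewrite /tm_step /= lq_running //= val_lq //=; case: ifP.
Qed.

Lemma iter_scan x s o l : size s <= B ->
  iter (size x) lstep (lconf (lq (0, s, o, 0)) l (head None (map Some x)) (behead (map Some x))) =
  lconf (lq (0, (scan s o x).1, (scan s o x).2, 0)) (catrev (map Some x) l) None [::].
Proof.
elim: x s o l => [|b x IH] s o l hs //=.
rewrite -iterS iterSr lstep_scan //.
by case: ifP => h; rewrite IH.
Qed.

Lemma lstep_scan_end s o l r : size s <= B ->
  lstep (lconf (lq (0, s, o, 0)) l None r) =
  lconf (lq (if size (lanswer s o) == 0 then lhalt else (1, s, o, size (lanswer s o))))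
        l None r.
Proof.
move=> hs; have hd : (0, s, o, 0) \in lstates by apply: lstatesP.
by rewrite /tm_step /= lq_running //= val_lq.
Qed.

Lemma lstep_write s o j l h r : size s <= B -> 0 < j -> j <= size (lanswer s o) ->
  lstep (lconf (lq (1, s, o, j)) l h r) =
  if j <= 1 then lconf lq_halt l (Some (nth false (lanswer s o) j.-1)) r
  else lconf (lq (1, s, o, j.-1)) (behead l) (head None l)
             (Some (nth false (lanswer s o) j.-1) :: r).
Proof.
move=> hs hj0 hj.
have hd : (1, s, o, j) \in lstates.
  by apply: lstatesP => //; apply: (leq_trans hj); apply: size_lanswer.
rewrite /tm_step /= lq_running //= val_lq //=.
by case: ifP => _ //; rewrite lq_lhalt.
Qed.

Lemma iter_write s o j l h r : size s <= B -> 0 < j -> j <= size (lanswer s o) ->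
  exists l', iter j lstep (lconf (lq (1, s, o, j)) l h r) =
  lconf lq_halt l' (Some (nth false (lanswer s o) 0))
        (map Some (drop 1 (take j (lanswer s o))) ++ r).
Proof.
move=> hs; elim: j l h r => [//|j IH] l h r _ hj.
rewrite iterSr lstep_write //.
case: j IH hj => [|j] IH hj /=.
  by exists l; case: (lanswer s o) hj => //= a y _; rewrite take0.
have [l' E] := IH (behead l) (head None l)
                 (Some (nth false (lanswer s o) j.+1) :: r) isT (ltnW hj).
rewrite -iterS E; exists l'; congr TMConf.
rewrite (take_nth false hj) -cats1 drop_cat size_take hj.
case: j hj {IH E} => [|j] hj /=.
  by case: (lanswer s o) hj => //= a [|b y] //= _; rewrite take0.
by rewrite map_cat -catA.
Qed.

(* The machine finishes within [size x + 1 + lanswer_bound] steps. *)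
Lemma lookup_tm_computes x :
  tm_poly_computes lookup_tm lanswer_bound.+2 x (if size x <= B then F x else yo).
Proof.
rewrite /tm_poly_computes -lanswer_scan.
set N := _ * _ + _; set s := (scan _ _ x).1; set o := (scan _ _ x).2.
set y := lanswer s o.
have hs : size s <= B by apply: size_scan.
have hN : size x + 1 + size y <= N.
  rewrite /N -addnA leq_add ?le_self_poly //.
  by rewrite add1n ltnS (leq_trans (size_lanswer _ hs)).
have hscan : iter (size x).+1 lstep (tm_init lookup_tm x) =
    lconf (lq (if size y == 0 then lhalt else (1, s, o, size y)))
          (catrev (map Some x) [::]) None [::].
  by rewrite iterS /tm_init /= iter_scan // lstep_scan_end.
have [y0 | ypos] := posnP (size y).
  have -> : N = (N - (size x).+1) + (size x).+1 by lia.
  rewrite [iter _ _ _]iterD hscan y0 /=.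
  by rewrite lq_lhalt tm_halted_iter // (size0nil y0).
have -> : N = (N - (size x + 1 + size y)) + (size y + (size x).+1) by lia.
rewrite [iter _ _ _]iterD [iter (size y + _) _ _]iterD hscan.
rewrite (negbTE (lt0n_neq0 ypos)).
have [l' ->] := iter_write (catrev (map Some x) [::]) None [::] hs ypos (leqnn _).
rewrite tm_halted_iter //= take_size cats0 /tm_output /=.
split => //; move: ypos; rewrite /y; case: (lanswer s o) => //= a z _.
by rewrite drop0 read_out_map.
Qed.

End LookupMachine.

Lemma lookup_computable B (F : seq bool -> seq bool) (yo : seq bool) :
  exists (M : TM) (d : nat), forall x,
    tm_poly_computes M d x (if size x <= B then F x else yo).
Proof. by exists (lookup_tm B F yo), (lanswer_bound B F yo).+2; apply: lookup_tm_computes. Qed.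

Definition bits2nat (s : seq bool) : nat :=
  foldr (fun (b : bool) (n : nat) => (b : nat) + n.*2) 0 s.

Lemma half_lt n : 0 < n -> n./2 < n.
Proof. by move=> h; rewrite -divn2 ltn_Pdiv. Qed.

Lemma nat2bits_aux_spec f n : n <= f ->
  [/\ bits2nat (nat2bits_aux f n) = n, size (nat2bits_aux f n) <= n &
      size (nat2bits_aux f n) <= trunc_log 2 n + 1].
Proof.
elim: f n => [|f IH] n hn; first by move: hn; rewrite leqn0 => /eqP ->.
case: n hn => [|n] hn //=.
have h2 : n.+1./2 <= f by rewrite -ltnS (leq_trans (half_lt _) hn).
have [e s1 s2] := IH _ h2.
split.
- by rewrite e -[in RHS](odd_double_half n.+1).
- exact: leq_ltn_trans s1 (half_lt _).
- case: n hn h2 e s1 s2 => [|n] _ _ _ _ s2; first by clear s2; case: f {IH}.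
  by rewrite (trunc_log2S (isT : 1 < n.+2)) addn1 ltnS; rewrite addn1 in s2.
Qed.

Lemma nat2bitsK n : bits2nat (nat2bits n) = n.
Proof. by case: (nat2bits_aux_spec (leqnn n)). Qed.

Lemma size_nat2bits n : size (nat2bits n) <= n.
Proof. by case: (nat2bits_aux_spec (leqnn n)). Qed.

Lemma size_nat2bits_log n : size (nat2bits n) <= trunc_log 2 n + 1.
Proof. by case: (nat2bits_aux_spec (leqnn n)). Qed.

(* Decoding of [enc_list]: a doubled bit is a data bit, [0 1] ends a string. *)
Fixpoint dec_list_from (s : seq bool) (cur : seq bool) : seq (seq bool) :=
  match s with
  | a :: b :: s' => if a == b then dec_list_from s' (rcons cur a)
                    else cur :: dec_list_from s' [::]
  | _ => [::]
  end.
Definition dec_list (s : seq bool) : seq (seq bool) := dec_list_from s [::].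

Lemma enc_list_cons x xs : enc_list (x :: xs) = enc_bits x ++ [:: false; true] ++ enc_list xs.
Proof. by rewrite /enc_list /= -catA. Qed.

Lemma enc_listK : cancel enc_list dec_list.
Proof.
have step x rest cur : dec_list_from (enc_bits x ++ [:: false; true] ++ rest) cur =
                       (cur ++ x) :: dec_list_from rest [::].
  elim: x cur => [|b x IH] cur /=; first by rewrite cats0.
  by rewrite eqxx IH cat_rcons.
elim=> [//|x xs IH].
by rewrite enc_list_cons /dec_list step -/(dec_list _) IH.
Qed.

Lemma size_enc_list xs : size (enc_list xs) = \sum_(x <- xs) ((size x).*2 + 2).
Proof.
have size_enc_bits y : size (enc_bits y) = (size y).*2.
  by elim: y => //= b y IH; rewrite IH doubleS.
elim: xs => [|x xs IH]; first by rewrite big_nil.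
by rewrite enc_list_cons big_cons !size_cat IH size_enc_bits addnA.
Qed.

Lemma sum_le_const (T : eqType) (s : seq T) (f : T -> nat) m :
  (forall x, x \in s -> f x <= m) -> \sum_(x <- s) f x <= size s * m.
Proof.
elim: s => [|x s IH] h; first by rewrite big_nil.
rewrite big_cons mulSn leq_add ?h ?mem_head //.
by apply: IH => y hy; apply: h; rewrite inE hy orbT.
Qed.

Lemma size_enc_list_le xs m : (forall x, x \in xs -> size x <= m) ->
  size (enc_list xs) <= size xs * (m.*2 + 2).
Proof.
move=> h; rewrite size_enc_list; apply: sum_le_const => x hx.
by rewrite leq_add2r leq_double h.
Qed.

Section Adjacency.

Variable adj : seq (seq nat).
Hypothesis hw : wf_adj adj.
Local Notation n := (size adj).

Lemma nbrs_sym v u : v < n -> u \in nbrs adj v ->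
  [/\ u < n, u != v & v \in nbrs adj u].
Proof.
move=> hv hu; case: hw => _ h hs _.
have [_ /allP /(_ _ hu) /andP [un uv]] := h v hv.
by split => //; rewrite hs.
Qed.

Lemma nbrs_uniq v : v < n -> uniq (nbrs adj v).
Proof. by case: hw => _ h _ _ /h []. Qed.

Lemma size_nbrs v : v < n -> size (nbrs adj v) <= n.
Proof.
move=> hv; rewrite -[X in _ <= X](size_iota 0); apply: uniq_leq_size; first exact: nbrs_uniq.
by move=> u hu; rewrite mem_iota /=; case: (nbrs_sym hv hu).
Qed.

Lemma sum_nbrs_ord v (g : nat -> nat) : v < n ->
  \sum_(u <- nbrs adj v) g u = \sum_(u < n | (u : nat) \in nbrs adj v) g u.
Proof.
move=> hv; rewrite -(big_mkord (fun u => u \in nbrs adj v)) /index_iota subn0.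
rewrite -[in RHS]big_filter; apply: perm_big; apply: uniq_perm.
- exact: nbrs_uniq.
- by rewrite filter_uniq // iota_uniq.
- move=> u; rewrite mem_filter mem_iota /= add0n.
  by case hu: (u \in nbrs adj v) => //=; case: (nbrs_sym hv hu).
Qed.

Lemma sum_nbrs_swap (f : nat -> nat -> nat) :
  \sum_(v < n) \sum_(u <- nbrs adj v) f v u = \sum_(u < n) \sum_(v <- nbrs adj u) f v u.
Proof.
under eq_bigr => v _ do rewrite sum_nbrs_ord // big_mkcond.
under [RHS]eq_bigr => u _ do rewrite sum_nbrs_ord // big_mkcond.
rewrite exchange_big /=; apply: eq_bigr => u _; apply: eq_bigr => v _.
by case: hw => _ _ hs _; rewrite hs.
Qed.

Lemma sum_nbrs_sym (g : nat -> nat -> nat) :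
  (forall v u, v < n -> u \in nbrs adj v -> g v u = g u v) ->
  \sum_(v < n) \sum_(u <- nbrs adj v) g v u =
  (\sum_(v < n) \sum_(u <- nbrs adj v | v < u) g v u).*2.
Proof.
move=> hg; rewrite -addnn.
under eq_bigr => v _ do rewrite (bigID (fun u => v < u)).
rewrite big_split /=; congr (_ + _).
under eq_bigr => v _ do rewrite big_mkcond.
rewrite (sum_nbrs_swap (fun v u => if ~~ (v < u) then g v u else 0)).
apply: eq_bigr => u _; rewrite [RHS]big_mkcond big_seq [RHS]big_seq.
apply: eq_bigr => v hv; have [vn vu uv] := nbrs_sym (ltn_ord u) hv.
rewrite -leqNgt leq_eqVlt eq_sym (negbTE vu) /=.
by case: ifP => // _; rewrite hg.
Qed.

Lemma edge_invariant_const (g : nat -> nat) :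
  (forall v u, v < n -> u \in nbrs adj v -> g u = g v) ->
  forall v, v < n -> g v = g 0.
Proof.
move=> hg v hv; have [n0 _ _ hc] := hw; have [p [hp <-]] := hc v hv.
elim: p 0 n0 hp {hc hv} => [//|y p IH] x hx /= /andP [hy hp].
by have [yn _ _] := nbrs_sym hx hy; rewrite IH // (hg x y).
Qed.

End Adjacency.

(* The cut weight counted over directed edges, i.e. twice [cut_weight]. *)
Definition dcut (adj : seq (seq nat)) (w : nat -> nat -> nat) (S : nat -> bool) : nat :=
  \sum_(v < size adj) \sum_(u <- nbrs adj v) (S v != S u) * w v u.

(* The weighted degree sum, i.e. twice the total edge weight [T]. *)
Definition wsum (adj : seq (seq nat)) (w : nat -> nat -> nat) : nat :=
  \sum_(v < size adj) \sum_(u <- nbrs adj v) w v u.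

Definition wsym (adj : seq (seq nat)) (w : nat -> nat -> nat) : Prop :=
  forall v u, v < size adj -> u \in nbrs adj v -> w v u = w u v.

Lemma exists_ge_average (T : finType) (f : T -> nat) a :
  0 < #|T| -> a * #|T| <= \sum_t f t -> exists t, a <= f t.
Proof.
move=> hT hsum; case: (pickP (fun t => a <= f t)) => [t ht | none]; first by exists t.
have : \sum_t (f t + 1) <= \sum_(t : T) a.
  by apply: leq_sum => t _; rewrite addn1 ltnNge none.
rewrite sum_nat_const big_split /= sum1_card => h; exfalso.
by move: h hsum hT; rewrite -[#|xpredT|]/#|T|; lia.
Qed.

Definition flip_at n v (t : n.-tuple bool) : n.-tuple bool :=
  [tuple if i == v :> nat then ~~ tnth t i else tnth t i | i < n].

Lemma nth_flip_at n v (t : n.-tuple bool) j : j < n ->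
  nth false (flip_at v t) j = if j == v then ~~ nth false t j else nth false t j.
Proof.
by move=> hj; rewrite -[j]/(val (Ordinal hj)) -!tnth_nth tnth_mktuple.
Qed.

Lemma flip_atK n v : involutive (@flip_at n v).
Proof.
move=> t; apply: eq_from_tnth => i; rewrite !tnth_mktuple.
by case: (_ == _) => //=; rewrite negbK.
Qed.

Lemma count_separating n v u : v < n -> u < n -> v != u ->
  (\sum_(t : n.-tuple bool) (nth false t v != nth false t u)).*2 = 2 ^ n.
Proof.
move=> hv hu hvu.
have e : \sum_(t : n.-tuple bool) (nth false t v != nth false t u) =
         \sum_(t : n.-tuple bool) (nth false t v == nth false t u).
  rewrite (reindex_inj (can_inj (flip_atK v))) /=; apply: eq_bigr => t _.
  have huv : (u == v) = false by rewrite eq_sym (negbTE hvu).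
  rewrite !nth_flip_at // eqxx huv.
  by case: (nth false t v); case: (nth false t u).
rewrite -addnn {2}e -big_split /=.
under eq_bigr => t _ do rewrite addn_negb.
by rewrite sum_nat_const card_tuple card_bool muln1.
Qed.

Section CutBounds.

Variables (adj : seq (seq nat)) (w : nat -> nat -> nat).
Hypotheses (hw : wf_adj adj) (hs : wsym adj w).
Local Notation n := (size adj).
Local Notation cut_of t := (fun v => nth false t v).

Lemma dcut_double S : dcut adj w S = (cut_weight adj w S).*2.
Proof.
rewrite /dcut (@sum_nbrs_sym adj hw (fun v u => (S v != S u) * w v u)) //.
by move=> v u hv hu; rewrite hs // eq_sym.
Qed.

(* Every cut is at most the total weight, so [2 OPT <= wsum]. *)
Lemma OPT_le_wsum : (mc_OPT adj w).*2 <= wsum adj w.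
Proof.
have cut_le S : (cut_weight adj w S).*2 <= wsum adj w.
  rewrite -dcut_double; apply: leq_sum => v _; apply: leq_sum => u _.
  by case: (S v != S u); rewrite ?mul1n ?mul0n.
rewrite -geq_half_double; apply/bigmax_leqP => t _.
by rewrite geq_half_double.
Qed.

Lemma sum_dcut :
  (\sum_(t : n.-tuple bool) dcut adj w (cut_of t)).*2 = wsum adj w * 2 ^ n.
Proof.
rewrite /dcut exchange_big -muln2 big_distrl /= /wsum big_distrl /=.
apply: eq_bigr => v _; rewrite exchange_big big_distrl big_distrl /=.
rewrite big_seq [RHS]big_seq; apply: eq_bigr => u hu.
have [un uv _] := nbrs_sym hw (ltn_ord v) hu.
rewrite -big_distrl /= -mulnA [w v u * _]mulnC mulnA muln2.
by rewrite count_separating 1?eq_sym // mulnC.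
Qed.

Lemma exists_heavy_bipartition :
  exists t : n.-tuple bool, wsum adj w <= (dcut adj w (cut_of t)).*2.
Proof.
apply: exists_ge_average; first by rewrite card_tuple card_bool expn_gt0.
rewrite card_tuple card_bool -sum_dcut.
under [X in _ <= X]eq_bigr => t _ do rewrite -muln2.
by rewrite -big_distrl /= muln2.
Qed.

Lemma cut_weight_const (S : nat -> bool) b :
  (forall v, v < n -> S v = b) -> cut_weight adj w S = 0.
Proof.
move=> hS; apply: big1 => v _; rewrite big_seq_cond; apply: big1 => u /andP [hu _].
have [un _ _] := nbrs_sym hw (ltn_ord v) hu.
by rewrite !hS // eqxx mul0n.
Qed.

(* A heavy bipartition is a proper cut (or has weight 0), so [wsum <= 4 OPT]. *)
Lemma wsum_le_OPT : wsum adj w <= (mc_OPT adj w).*2.*2.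
Proof.
have [t ht] := exists_heavy_bipartition.
apply: (leq_trans ht); rewrite dcut_double !leq_double.
have const_cut b : ~~ [exists i, tnth t i != b] -> cut_weight adj w (cut_of t) = 0.
  move/existsPn => hb; apply: (cut_weight_const (b := b)) => v hv.
  by move: (hb (Ordinal hv)); rewrite (tnth_nth false) negbK => /eqP.
case: (boolP [exists i, tnth t i != false]) => [h1|h1]; last by rewrite (const_cut false h1).
case: (boolP [exists i, tnth t i != true]) => [h2|h2]; last by rewrite (const_cut true h2).
apply: (@leq_bigmax_cond _ _ (fun s : n.-tuple bool => cut_weight adj w (cut_of s)) t).
apply/andP; split.
- by case/existsP: h1 => i hi; apply/existsP; exists i; move: hi; case: (tnth t i).
- by case/existsP: h2 => i hi; apply/existsP; exists i; move: hi; case: (tnth t i).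
Qed.

End CutBounds.

Section BFSTree.

Variable adj : seq (seq nat).
Local Notation n := (size adj).

Fixpoint reach (m v : nat) : bool :=
  if m is m'.+1 then has (fun x => reach m' x && (v \in nbrs adj x)) (iota 0 n)
  else v == 0.

(* The distance from the root (0 for unreachable nodes, which do not exist). *)
Definition bfs_dist (v : nat) : nat :=
  match excluded_middle_informative (exists m, reach m v) with
  | left h => ex_minn h
  | right _ => 0
  end.

Definition bfs_parent (v : nat) : nat :=
  head 0 [seq x <- iota 0 n | (bfs_dist x == (bfs_dist v).-1) && (v \in nbrs adj x)].

Lemma bfs_parent_lt v : 0 < n -> bfs_parent v < n.
Proof.
move=> hn; rewrite /bfs_parent; set s := [seq x <- _ | _].
case e: s => [//|a s'] /=.
have : a \in s by rewrite e mem_head.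
by rewrite mem_filter mem_iota => /andP [_ /andP [_]].
Qed.

Fixpoint subtree_sum_fuel (loc : nat -> nat) (f v : nat) : nat :=
  loc v + (if f is f'.+1 then
             \sum_(c <- nbrs adj v | (c != 0) && (bfs_parent c == v)) subtree_sum_fuel loc f' c
           else 0).

Definition bfs_height : nat := (\max_(v < n) bfs_dist v).+1.

Definition subtree_sum (loc : nat -> nat) (v : nat) : nat :=
  subtree_sum_fuel loc (bfs_height - bfs_dist v) v.

Hypothesis hw : wf_adj adj.

Lemma reach_path p x m : x < n -> reach m x ->
  path (fun x y => y \in nbrs adj x) x p -> reach (size p + m) (last x p).
Proof.
elim: p x m => [//|y p IH] x m hx hr /andP [hy hp].
have [yn _ _] := nbrs_sym hw hx hy.
change (reach ((size p).+1 + m) (last y p)); rewrite addSnnS; apply: IH => //=.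
by apply/hasP; exists x; rewrite ?mem_iota ?hr.
Qed.

Lemma bfs_dist_spec v : v < n ->
  reach (bfs_dist v) v /\ forall m, reach m v -> bfs_dist v <= m.
Proof.
move=> hv; rewrite /bfs_dist; case: excluded_middle_informative => [h|h].
  by case: ex_minnP.
exfalso; apply: h; have [hn _ _ hc] := hw; have [p [hp hl]] := hc v hv.
by exists (size p + 0); rewrite -hl; apply: reach_path.
Qed.

Lemma bfs_dist_pos v : v < n -> v != 0 -> 0 < bfs_dist v.
Proof.
move=> hv hv0; have [h _] := bfs_dist_spec hv.
by move: h; case: (bfs_dist v) => //= /eqP e; move: hv0; rewrite e.
Qed.

Lemma bfs_dist_step x v : x < n -> v \in nbrs adj x -> bfs_dist v <= (bfs_dist x).+1.
Proof.
move=> hx hv; have [vn _ _] := nbrs_sym hw hx hv.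
have [h1 _] := bfs_dist_spec hx; have [_ h2] := bfs_dist_spec vn.
by apply: h2 => /=; apply/hasP; exists x; rewrite ?mem_iota ?h1.
Qed.

Lemma bfs_parent_spec v : v < n -> v != 0 ->
  [/\ bfs_parent v < n, v \in nbrs adj (bfs_parent v), bfs_parent v \in nbrs adj v &
      bfs_dist (bfs_parent v) = (bfs_dist v).-1].
Proof.
move=> hv hv0; have hd := bfs_dist_pos hv hv0; have [h1 _] := bfs_dist_spec hv.
set P := fun x => (bfs_dist x == (bfs_dist v).-1) && (v \in nbrs adj x).
have ex : has P (iota 0 n).
  move: h1; case e: (bfs_dist v) hd => [//|m] _ /= /hasP [x hx /andP [hr hvx]].
  apply/hasP; exists x => //; rewrite /P hvx andbT.
  have xn : x < n by move: hx; rewrite mem_iota.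
  have [_ hmin] := bfs_dist_spec xn.
  by rewrite e /= eqn_leq hmin //= -ltnS -e (bfs_dist_step xn hvx).
have : bfs_parent v \in [seq x <- iota 0 n | P x].
  rewrite /bfs_parent; move: ex; rewrite has_filter.
  by case: [seq x <- _ | _] => //= a s _; rewrite mem_head.
rewrite mem_filter mem_iota /= add0n => /andP [/andP [/eqP hd' hvp] hpn].
by have [_ _ hs] := nbrs_sym hw hpn hvp.
Qed.

Lemma bfs_dist_child c : c < n -> c != 0 -> bfs_dist c = (bfs_dist (bfs_parent c)).+1.
Proof.
move=> hc hc0; have [_ _ _ ->] := bfs_parent_spec hc hc0.
by rewrite prednK // bfs_dist_pos.
Qed.

Lemma has_nbr v : 1 < n -> v < n -> exists u, u \in nbrs adj v.
Proof.
move=> h1 hv; case: (eqVneq v 0) => [->|hv0].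
  have [_ _ _ hc] := hw; have [p [hp hl]] := hc 1 h1.
  by case: p hp hl => [|y p] //= /andP [hy _] _; exists y.
by have [_ _ h _] := bfs_parent_spec hv hv0; exists (bfs_parent v).
Qed.

Variable loc : nat -> nat.

Lemma subtree_sum_rec v : v < n ->
  subtree_sum loc v =
  loc v + \sum_(c <- nbrs adj v | (c != 0) && (bfs_parent c == v)) subtree_sum loc c.
Proof.
move=> hv; rewrite /subtree_sum.
have hH : bfs_dist v < bfs_height.
  by rewrite ltnS (@leq_bigmax _ (fun v : 'I_n => bfs_dist v) (Ordinal hv)).
case e: (bfs_height - bfs_dist v) => [|f].
  by move/eqP: e; rewrite subn_eq0 leqNgt hH.
rewrite /=; congr (_ + _).
rewrite big_seq_cond [RHS]big_seq_cond; apply: eq_bigr => c /andP [hc /andP [c0 /eqP pc]].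
have [cn _ _] := nbrs_sym hw hv hc.
by rewrite (bfs_dist_child cn c0) pc subnS e.
Qed.

Lemma sum_parent_pointers (g : nat -> nat) c : c < n ->
  \sum_(v <- nbrs adj c) (if (c != 0) && (bfs_parent c == v) then g c else 0) =
  if c != 0 then g c else 0.
Proof.
move=> hc; case: ifP => hc0 /=; last by apply: big1 => v _.
have [_ _ hpc _] := bfs_parent_spec hc hc0.
rewrite (bigD1_seq (bfs_parent c)) ?nbrs_uniq //= eqxx big1_seq ?addn0 //.
by move=> v /andP [hv _]; rewrite eq_sym (negbTE hv).
Qed.

Lemma subtree_sum_root : subtree_sum loc 0 = \sum_(v < n) loc v.
Proof.
have hn : 0 < n by case: hw.
pose rest := \sum_(v < n) (if (v : nat) != 0 then subtree_sum loc v else 0).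
have E1 : \sum_(v < n) subtree_sum loc v = \sum_(v < n) loc v + rest.
  under eq_bigr => v _ do rewrite subtree_sum_rec // big_mkcond.
  rewrite big_split /= (sum_nbrs_swap hw
    (fun v c => if (c != 0) && (bfs_parent c == v) then subtree_sum loc c else 0)).
  by congr (_ + _); apply: eq_bigr => c _; apply: sum_parent_pointers.
have E2 : \sum_(v < n) subtree_sum loc v = subtree_sum loc 0 + rest.
  rewrite (bigD1 (Ordinal hn)) //= [rest](bigD1 (Ordinal hn)) //= add0n.
  congr (_ + _); apply: eq_bigr => v hv; suff -> : (v : nat) != 0 by [].
  by move: hv; apply: contra => /eqP e; apply/eqP; apply: val_inj.
by apply/eqP; rewrite -(eqn_add2r rest) -E1 -E2.
Qed.

Lemma subtree_sum_le_parent v : v < n -> v != 0 ->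
  subtree_sum loc v <= subtree_sum loc (bfs_parent v).
Proof.
move=> hv hv0; have [pn hvp _ _] := bfs_parent_spec hv hv0.
rewrite [X in _ <= X](subtree_sum_rec pn) big_mkcond (bigD1_seq v) ?nbrs_uniq //=.
by rewrite hv0 eqxx /= addnCA leq_addr.
Qed.

Lemma subtree_sum_le_root v : v < n -> subtree_sum loc v <= subtree_sum loc 0.
Proof.
move: {2}(bfs_dist v) (leqnn (bfs_dist v)) => m.
elim: m v => [|m IH] v hd hv; case: (eqVneq v 0) => [-> //| hv0].
  by move: (bfs_dist_pos hv hv0); rewrite leqn0 in hd; rewrite (eqP hd).
have [pn _ _ hdp] := bfs_parent_spec hv hv0.
apply: leq_trans (subtree_sum_le_parent hv hv0) (IH _ _ pn).
by rewrite hdp; move: hd; case: (bfs_dist v).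
Qed.

End BFSTree.

Lemma pointer_sum_bound adj (load s : nat -> nat) (points : nat -> nat -> bool)
    (root : nat -> bool) : wf_adj adj ->
  (forall v, v < size adj -> load v + \sum_(u <- nbrs adj v | points u v) s u <= s v) ->
  (forall u, u < size adj -> count (points u) (nbrs adj u) = ~~ root u) ->
  \sum_(v < size adj) load v <= \sum_(v < size adj | root v) s v.
Proof.
move=> hw hloc hcount.
pose inflow v := \sum_(u <- nbrs adj v) (if points u v then s u else 0).
have total_inflow : \sum_(v < size adj) inflow v = \sum_(u < size adj | ~~ root u) s u.
  rewrite /inflow (sum_nbrs_swap hw (fun v u => if points u v then s u else 0)).
  rewrite [RHS]big_mkcond /=; apply: eq_bigr => u _.
  rewrite -big_mkcond big_const_seq iter_addn_0 hcount ?ltn_ord //.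
  by case: (root u); rewrite ?muln0 ?muln1.
have : \sum_(v < size adj) load v + \sum_(v < size adj) inflow v <= \sum_(v < size adj) s v.
  by rewrite -big_split; apply: leq_sum => v _; rewrite /inflow -big_mkcond hloc.
by rewrite total_inflow [X in _ <= X](bigID (fun v : 'I_(size adj) => root v)) /= leq_add2r.
Qed.

(* Decoding labels and local inputs.  A label lists five numbers: root flag,
   own identifier, root identifier, parent identifier, subtree-weight claim. *)
Definition lfield (i : nat) (l : seq bool) : nat := bits2nat (nth [::] (dec_list l) i).
Definition lroot (l : seq bool) : bool := lfield 0 l != 0.
Definition input_id (sv : seq bool) : nat := bits2nat (nth [::] (dec_list sv) 0).
Definition input_load (sv : seq bool) : nat := \sum_(x <- behead (dec_list sv)) bits2nat x.

Lemma input_id_mc adj id w v : input_id (mc_input adj id w v) = id v.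
Proof. by rewrite /input_id /mc_input enc_listK /= nat2bitsK. Qed.

Lemma input_load_mc adj id w v : input_load (mc_input adj id w v) = \sum_(u <- nbrs adj v) w v u.
Proof.
rewrite /input_load /mc_input enc_listK /= big_map.
by apply: eq_bigr => u _; rewrite nat2bitsK.
Qed.

(* The local check with threshold [K] on the total weighted degree: the own
   identifier is correct, the root identifier agrees with all neighbours, a
   root is its own root and claims at most [K], a non-root has a neighbour
   with its parent identifier, and the claim covers the incident weight plus
   the claims of the children (the neighbours naming this node as parent). *)
Definition mc_check (K : nat) (sv l : seq bool) (ln : seq (seq bool)) : bool :=
  [&& lfield 1 l == input_id sv,
      all (fun m => lfield 2 m == lfield 2 l) ln,
      lroot l ==> (lfield 1 l == lfield 2 l) && (lfield 4 l <= K),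
      ~~ lroot l ==> has (fun m => lfield 1 m == lfield 3 l) ln &
      input_load sv + \sum_(m <- ln | ~~ lroot m && (lfield 3 m == lfield 1 l)) lfield 4 m
        <= lfield 4 l].

Lemma nth_mc_input adj id w v : v < size adj ->
  nth [::] (cinp (mc_config adj id w)) v = mc_input adj id w v.
Proof. by move=> hv; rewrite /= nth_mkseq. Qed.

Section Soundness.

Variables (cid K : nat) (adj : seq (seq nat)) (id : nat -> nat) (w : nat -> nat -> nat).
Variable L : labels.
Hypothesis hl : mc_legal cid adj id w.
Hypothesis hacc : forall v, v < size adj ->
  mc_check K (mc_input adj id w v) (lab L v) [seq lab L u | u <- nbrs adj v].

Local Notation n := (size adj).
Local Notation F i v := (lfield i (lab L v)).
Local Notation is_root v := (lroot (lab L v)).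

Let hw : wf_adj adj. Proof. by case: hl. Qed.
Let id_inj : forall u v, u < n -> v < n -> id u = id v -> u = v.
Proof. by case: hl. Qed.

Lemma own_id_field v : v < n -> F 1 v = id v.
Proof. by move=> hv; case/and5P: (hacc hv) => /eqP -> *; rewrite input_id_mc. Qed.

Lemma root_id_field_const v : v < n -> F 2 v = F 2 0.
Proof.
move=> hv; apply: (edge_invariant_const hw (g := fun v => F 2 v)) hv => x u hx hu.
case/and5P: (hacc hx) => _ /allP h _ _ _.
by apply/eqP; apply: h; apply: map_f.
Qed.

Lemma root_field v : v < n -> is_root v -> F 1 v = F 2 v /\ F 4 v <= K.
Proof. by move=> hv hr; case/and5P: (hacc hv) => _ _ /implyP /(_ hr) /andP [/eqP]. Qed.

(* All roots have the root identifier, so there is at most one of them. *)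
Lemma root_unique u v : u < n -> v < n -> is_root u -> is_root v -> u = v.
Proof.
move=> hu hv ru rv; apply: id_inj => //.
rewrite -own_id_field // -own_id_field //.
by rewrite (root_field hu ru).1 (root_field hv rv).1 !root_id_field_const.
Qed.

(* A non-root points to exactly one neighbour: the one carrying the parent
   identifier (identifiers are unique). *)
Lemma parent_pointer_count u : u < n ->
  count (fun v => ~~ is_root u && (F 3 u == id v)) (nbrs adj u) = ~~ is_root u.
Proof.
move=> hu; case: (boolP (is_root u)) => hr /=; first by rewrite count_pred0.
case/and5P: (hacc hu) => _ _ _ /implyP /(_ hr) /hasP [m /mapP [p hp ->] /eqP hpid] _.
have [pn _ _] := nbrs_sym hw hu hp.
rewrite (@eq_in_count _ _ (pred1 p)) ?count_uniq_mem ?nbrs_uniq ?hp // => v hv /=.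
have [vn _ _] := nbrs_sym hw hu hv.
by rewrite -hpid !own_id_field //; apply/eqP/eqP => [/id_inj -> | ->].
Qed.

Lemma wsum_le_root_claims : wsum adj w <= \sum_(v < n | is_root v) F 4 v.
Proof.
apply: (@pointer_sum_bound adj (fun v => \sum_(u <- nbrs adj v) w v u) (fun v => F 4 v)
          (fun u v => ~~ is_root u && (F 3 u == id v)) (fun v => is_root v) hw).
  move=> v hv; case/and5P: (hacc hv) => _ _ _ _.
  by rewrite input_load_mc big_map own_id_field.
exact: parent_pointer_count.
Qed.

Lemma wsum_le_threshold : wsum adj w <= K.
Proof.
apply: leq_trans wsum_le_root_claims _.
case: (pickP (fun v : 'I_n => is_root v)) => [r hr | none]; last first.
  by rewrite big_pred0.
rewrite (bigD1 r) //= big1 ?addn0; first exact: (root_field (ltn_ord r) hr).2.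
move=> v /andP [hv /eqP hvr]; case: hvr; apply: val_inj.
exact: root_unique (ltn_ord v) (ltn_ord r) hv hr.
Qed.

End Soundness.

Definition cid_of (C : config) (v : nat) : nat := input_id (nth [::] (cinp C) v).
Definition cload (C : config) (v : nat) : nat := input_load (nth [::] (cinp C) v).

Definition label_fields (C : config) (v : nat) : seq nat :=
  [:: nat_of_bool (v == 0); cid_of C v; cid_of C 0; cid_of C (bfs_parent (cadj C) v);
      subtree_sum (cadj C) (cload C) v].

Definition mc_prover (C : config) : labels :=
  mkseq (fun v => enc_list (map nat2bits (label_fields C v))) (size (cadj C)).

Lemma lfield_prover C v i : v < size (cadj C) -> i < 5 ->
  lfield i (lab (mc_prover C) v) = nth 0 (label_fields C v) i.
Proof. by move=> hv hi; rewrite /lab nth_mkseq // /lfield enc_listK (nth_map 0) ?nat2bitsK. Qed.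

Section Completeness.

Variables (cid : nat) (adj : seq (seq nat)) (id : nat -> nat) (w : nat -> nat -> nat).
Hypothesis hl : mc_legal cid adj id w.

Local Notation n := (size adj).
Local Notation C := (mc_config adj id w).
Local Notation F i v := (lfield i (lab (mc_prover C) v)).

Let hw : wf_adj adj. Proof. by case: hl. Qed.
Let id_inj : forall u v, u < n -> v < n -> id u = id v -> u = v.
Proof. by case: hl. Qed.

Lemma cid_of_mc v : v < n -> cid_of C v = id v.
Proof. by move=> hv; rewrite /cid_of nth_mc_input // input_id_mc. Qed.

Lemma cload_mc v : v < n -> cload C v = \sum_(u <- nbrs adj v) w v u.
Proof. by move=> hv; rewrite /cload nth_mc_input // input_load_mc. Qed.

Lemma prover_root v : v < n -> lroot (lab (mc_prover C) v) = (v == 0).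
Proof. by move=> hv; rewrite /lroot lfield_prover //=; case: (v == 0). Qed.

Lemma root_claim : F 4 0 = wsum adj w.
Proof.
have hn : 0 < n by case: hw.
rewrite lfield_prover //= subtree_sum_root //; apply: eq_bigr => u _.
exact: cload_mc.
Qed.

Lemma names_parent_iff_child v c : v < n -> c \in nbrs adj v ->
  ~~ lroot (lab (mc_prover C) c) && (F 3 c == F 1 v) = (c != 0) && (bfs_parent adj c == v).
Proof.
move=> hv hc; have [cn _ _] := nbrs_sym hw hv hc.
rewrite prover_root // !lfield_prover //=; case: (eqVneq c 0) => //= c0.
have [pn _ _ _] := bfs_parent_spec hw cn c0.
by rewrite !cid_of_mc //; apply/eqP/eqP => [/(id_inj pn hv) | ->].
Qed.

Lemma mc_check_complete K : wsum adj w <= K -> forall v, v < n ->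
  mc_check K (nth [::] (cinp C) v) (lab (mc_prover C) v)
           [seq lab (mc_prover C) u | u <- nbrs adj v].
Proof.
have hn : 0 < n by case: hw.
move=> hK v hv; rewrite nth_mc_input //; apply/and5P; split.
- by rewrite lfield_prover //= input_id_mc cid_of_mc.
- apply/allP => m /mapP [u hu ->]; have [un _ _] := nbrs_sym hw hv hu.
  by rewrite !lfield_prover.
- apply/implyP; rewrite prover_root // => /eqP hv0; subst v.
  by rewrite root_claim hK andbT !lfield_prover.
- apply/implyP; rewrite prover_root // => hv0.
  have [pn _ hpv _] := bfs_parent_spec hw hv hv0.
  apply/hasP; exists (lab (mc_prover C) (bfs_parent adj v)); first exact: map_f.
  by rewrite !lfield_prover.
- rewrite big_map input_load_mc (@lfield_prover C v 4 hv) //= subtree_sum_rec // cload_mc //.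
  rewrite leq_add2l big_seq_cond [X in _ <= X]big_seq_cond.
  apply: eq_leq; apply: eq_big => [c | c /andP [hc _]].
    by case hc: (c \in nbrs adj v) => //=; apply: names_parent_iff_child.
  by have [cn _ _] := nbrs_sym hw hv hc; rewrite lfield_prover.
Qed.

End Completeness.

Lemma trunc_log2_le n : trunc_log 2 n <= n.
Proof.
case: n => [|n]; first by rewrite trunc_log0.
apply: leq_trans (trunc_logP (isT : 1 < 2) (isT : 0 < n.+1)).
exact: ltnW (ltn_expl _ (isT : 1 < 2)).
Qed.

Lemma trunc_log2_mul a b : trunc_log 2 (a * b) <= trunc_log 2 a + trunc_log 2 b + 1.
Proof.
case: a => [|a]; first by rewrite mul0n trunc_log0.
case: b => [|b]; first by rewrite muln0 trunc_log0.
have ha := trunc_log_ltn a.+1 (isT : 1 < 2).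
have hb := trunc_log_ltn b.+1 (isT : 1 < 2).
have hab := trunc_logP (isT : 1 < 2) (isT : 0 < a.+1 * b.+1).
have : a.+1 * b.+1 < 2 ^ (trunc_log 2 a.+1 + trunc_log 2 b.+1 + 1).+1.
  move: ha hb; rewrite !expnS !expnD expn1.
  move: (2 ^ trunc_log 2 a.+1) (2 ^ trunc_log 2 b.+1) => x y ha hb; nia.
by move/(leq_ltn_trans hab); rewrite ltn_exp2l.
Qed.

Lemma w_le_W adj w v u : v < size adj -> u \in nbrs adj v -> w v u <= mc_W adj w.
Proof.
move=> hv hu; rewrite /mc_W.
apply: leq_trans (@leq_bigmax _ (fun v : 'I_(size adj) => \max_(u <- nbrs adj v) w v u) (Ordinal hv)).
exact: (@leq_bigmax_seq _ _ xpredT (fun u => w v u) u).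
Qed.

Section WeightBounds.

Variables (adj : seq (seq nat)) (w : nat -> nat -> nat).
Hypothesis hw : wf_adj adj.
Local Notation n := (size adj).

(* All claims in the labels are at most [n^2 W]. *)
Lemma wsum_le_nW : wsum adj w <= n * (n * mc_W adj w).
Proof.
rewrite /wsum -[X in _ <= X * _]card_ord -sum_nat_const; apply: leq_sum => v _.
apply: leq_trans (sum_le_const (m := mc_W adj w) _) _; first by move=> u; apply: w_le_W.
by rewrite leq_mul2r size_nbrs ?orbT.
Qed.

Lemma n_le_wsum : (forall v u, v < n -> u \in nbrs adj v -> 0 < w v u) ->
  1 < n -> n <= wsum adj w.
Proof.
move=> hpos h1; rewrite /wsum -[X in X <= _]card_ord -sum1_card; apply: leq_sum => v _.
have [u hu] := has_nbr hw h1 (ltn_ord v).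
rewrite (bigD1_seq u) ?nbrs_uniq //=; apply: leq_trans (leq_addr _ _); exact: hpos.
Qed.

Lemma subtree_sum_le_wsum (loc : nat -> nat) v :
  (forall x, x < n -> loc x = \sum_(u <- nbrs adj x) w x u) -> v < n ->
  subtree_sum adj loc v <= wsum adj w.
Proof.
move=> hloc hv; apply: leq_trans (subtree_sum_le_root hw _ hv) _.
by rewrite subtree_sum_root //; apply: eq_leq; apply: eq_bigr => x _; apply: hloc.
Qed.

End WeightBounds.

Lemma size_prover_label cid adj id w v : mc_legal cid adj id w -> v < size adj ->
  size (lab (mc_prover (mc_config adj id w)) v) <=
  (6 * cid + 18) * (trunc_log 2 (size adj) + trunc_log 2 (mc_W adj w)) + (6 * cid + 18).
Proof.
move=> hl hv; have [hw _ hsz _] := hl; have hn : 0 < size adj by case: hw.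
set C := mc_config adj id w.
have bid u : u < size adj -> size (nat2bits (cid_of C u)) <= cid * trunc_log 2 (size adj) + cid.
  by move=> hu; rewrite cid_of_mc //; apply: hsz.
have b0 : size (nat2bits (nat_of_bool (v == 0))) <= 1.
  by apply: leq_trans (size_nat2bits _) _; case: (v == 0).
have bs : size (nat2bits (subtree_sum adj (cload C) v)) <=
          trunc_log 2 (size adj) + trunc_log 2 (size adj) + trunc_log 2 (mc_W adj w) + 3.
  apply: leq_trans (size_nat2bits_log _) _.
  have hle : subtree_sum adj (cload C) v <= size adj * (size adj * mc_W adj w).
    by apply: leq_trans (wsum_le_nW w hw); apply: subtree_sum_le_wsum => // x hx; apply: cload_mc.
  have := leq_trunc_log 2 hle.
  have := trunc_log2_mul (size adj) (size adj * mc_W adj w).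
  have := trunc_log2_mul (size adj) (mc_W adj w); lia.
rewrite /lab nth_mkseq // size_enc_list big_map /label_fields /= !big_cons big_nil.
move: (bid v hv) (bid 0 hn) (bid _ (@bfs_parent_lt adj v hn)) b0 bs.
move: (trunc_log 2 (size adj)) (trunc_log 2 (mc_W adj w)) => T1 T2; nia.
Qed.

(* For a fixed threshold [K] on [wsum], yes-instances have bounded size:
   [num_bound] bounds the bits of each number in inputs and labels,
   [string_bound] the inputs and labels, [view_bound] the encoded views and
   [config_bound] the encoded configuration. *)
Definition num_bound (cid K : nat) : nat := cid * (K + 1) + cid + K + 1.
Definition string_bound (cid K : nat) : nat := (K + 7) * ((num_bound cid K).*2 + 2).
Definition view_bound (cid K : nat) : nat := (K + 3) * ((string_bound cid K).*2 + 2).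
Definition config_bound (cid K : nat) : nat :=
  (K + 1) * (((K + 2) * ((string_bound cid K).*2 + 2)).*2 + 2).

Section BoundedInstances.

Variables (cid K : nat) (adj : seq (seq nat)) (id : nat -> nat) (w : nat -> nat -> nat).
Hypotheses (hl : mc_legal cid adj id w) (hK : wsum adj w <= K).

Local Notation n := (size adj).
Local Notation C := (mc_config adj id w).
Local Notation A := (num_bound cid K).
Local Notation Z := (string_bound cid K).

Let hw : wf_adj adj. Proof. by case: hl. Qed.

(* Weights are positive, so [n <= wsum <= K] unless [n = 1]. *)
Lemma size_le_threshold : n <= K + 1.
Proof.
have [_ _ _ hwt] := hl; case: (leqP n 1) => h1; first by apply: leq_trans h1 _; rewrite leq_addl.
apply: leq_trans (n_le_wsum hw _ h1) (leq_trans hK (leq_addr _ _)).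
by move=> v u hv hu; case: (hwt u v hv hu).
Qed.

(* Identifiers have O(log n) bits and [n <= K + 1]. *)
Lemma size_id_bits u : u < n -> size (nat2bits (id u)) <= A.
Proof.
have [_ _ hsz _] := hl; move=> hu; apply: leq_trans (hsz u hu) _.
by have := trunc_log2_le n; have := size_le_threshold; rewrite /num_bound; nia.
Qed.

(* Weights, degrees and claims are at most [K]. *)
Lemma size_small_bits x : x <= K -> size (nat2bits x) <= A.
Proof. by move=> hx; apply: leq_trans (size_nat2bits _) _; rewrite /num_bound; lia. Qed.

Lemma degree_le_threshold v : v < n -> \sum_(u <- nbrs adj v) w v u <= K.
Proof. by move=> hv; apply: leq_trans hK; rewrite /wsum (bigD1 (Ordinal hv)) //= leq_addr. Qed.

Lemma size_input_le v : v < n -> size (mc_input adj id w v) <= Z.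
Proof.
move=> hv; apply: leq_trans (size_enc_list_le (m := A) _) _.
  move=> x; rewrite inE => /orP [/eqP -> | /mapP [u hu ->]]; first exact: size_id_bits.
  apply/size_small_bits/(leq_trans _ (degree_le_threshold hv)).
  by rewrite (bigD1_seq u) ?nbrs_uniq //= leq_addr.
rewrite /string_bound leq_mul2r /= size_map; apply/orP; right.
by have := size_nbrs hw hv; have := size_le_threshold; lia.
Qed.

Lemma size_label_le v : v < n -> size (lab (mc_prover C) v) <= Z.
Proof.
move=> hv; have hn : 0 < n by case: hw.
rewrite /lab nth_mkseq //; apply: leq_trans (size_enc_list_le (m := A) _) _; last first.
  by rewrite size_map /label_fields /string_bound leq_mul2r /=; apply/orP; right; lia.
move=> x /mapP [y hy ->]; move: hy; rewrite /label_fields !inE.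
case/orP => [/eqP->|/orP [/eqP->|/orP [/eqP->|/orP [/eqP->|/eqP->]]]].
- by apply: leq_trans (size_nat2bits _) _; case: (v == 0); rewrite /num_bound; lia.
- by rewrite cid_of_mc //; apply: size_id_bits.
- by rewrite cid_of_mc //; apply: size_id_bits.
- by rewrite cid_of_mc ?bfs_parent_lt //; apply: size_id_bits; apply: bfs_parent_lt.
- apply/size_small_bits/(leq_trans _ hK).
  by apply: subtree_sum_le_wsum => // z hz; apply: cload_mc.
Qed.

Lemma size_node_bits u : u < n -> size (nat2bits u) <= Z.
Proof.
move=> hu; apply: leq_trans (size_nat2bits _) _; apply: leq_trans (ltnW hu) _.
by apply: leq_trans size_le_threshold _; rewrite /string_bound /num_bound; nia.
Qed.

Lemma size_view_le v : v < n ->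
  size (enc_list (nth [::] (cinp C) v :: lab (mc_prover C) v
                  :: [seq lab (mc_prover C) u | u <- nbrs adj v])) <= view_bound cid K.
Proof.
move=> hv; apply: leq_trans (size_enc_list_le (m := Z) _) _.
  move=> x; rewrite !inE => /orP [/eqP -> | /orP [/eqP -> | /mapP [u hu ->]]].
  - by rewrite nth_mc_input //; apply: size_input_le.
  - exact: size_label_le.
  - by have [un _ _] := nbrs_sym hw hv hu; apply: size_label_le.
rewrite /view_bound leq_mul2r /= size_map; apply/orP; right.
by have := size_nbrs hw hv; have := size_le_threshold; lia.
Qed.

Lemma size_config_le : size (enc_config C) <= config_bound cid K.
Proof.
rewrite /enc_config.
apply: leq_trans (size_enc_list_le (m := (K + 2) * (Z.*2 + 2)) _) _; last first.
  by rewrite /config_bound size_mkseq leq_mul2r size_le_threshold orbT.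
move=> x /mapP [v]; rewrite mem_iota /= add0n => hv ->.
apply: leq_trans (size_enc_list_le (m := Z) _) _.
  move=> y; rewrite inE => /orP [/eqP -> | /mapP [u hu' ->]].
  - by rewrite nth_mc_input //; apply: size_input_le.
  - by have [un _ _] := nbrs_sym hw hv hu'; apply: size_node_bits.
rewrite leq_mul2r /= size_map; apply/orP; right.
by have := size_nbrs hw hv; have := size_le_threshold; lia.
Qed.

End BoundedInstances.

Definition dec_config (x : seq bool) : config :=
  Config [seq map bits2nat (behead (dec_list s)) | s <- dec_list x]
         [seq head [::] (dec_list s) | s <- dec_list x].

Lemma enc_configK adj id w : dec_config (enc_config (mc_config adj id w)) = mc_config adj id w.
Proof.
rewrite /dec_config /enc_config enc_listK /mkseq -!map_comp; congr Config.
- rewrite -[RHS](mkseq_nth [::]); apply: eq_map => v /=.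
  by rewrite enc_listK /= -map_comp (eq_map nat2bitsK) map_id.
- by rewrite -[RHS](mkseq_nth [::]) size_mkseq; apply: eq_map => v /=; rewrite enc_listK.
Qed.

Definition mc_verifier (cid K : nat) : verifierT := fun sv l ln =>
  (size (enc_list (sv :: l :: ln)) <= view_bound cid K) && mc_check K sv l ln.

Lemma legal_wsym cid adj id w : mc_legal cid adj id w -> wsym adj w.
Proof. by case=> _ _ _ hwt v u hv hu; case: (hwt u v hv hu). Qed.

Lemma yes_wsum_le cid adj id w k : mc_legal cid adj id w -> mc_OPT adj w <= k ->
  wsum adj w <= 4 * k.
Proof.
move=> hl hopt; have [hw _ _ _] := hl.
by apply: leq_trans (wsum_le_OPT hw (legal_wsym hl)) _; lia.
Qed.

Definition label_bound (c : nat) (n W : nat) : nat := c * (trunc_log 2 n + trunc_log 2 W) + c.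

(* For [k >= 0], the scheme with threshold [4k] is a 2-ADPLS:
   [OPT <= k] gives [wsum <= 4k], and [wsum <= 4k] gives [OPT <= 2k]. *)
Lemma mc_scheme_correct cid (k : nat) :
  mc_ADPLS 2 cid (Posz k) (label_bound (6 * cid + 18)) mc_prover (mc_verifier cid (4 * k)).
Proof.
split=> adj id w hl.
- rewrite lez_nat => /(yes_wsum_le hl) hK; split=> v hv.
  + by rewrite /mc_verifier (size_view_le hl hK hv) (mc_check_complete hl hK hv).
  + exact: size_prover_label.
- rewrite -PoszM ltz_nat => hopt L hacc.
  have hK : wsum adj w <= 4 * k.
    apply: (@wsum_le_threshold cid _ adj id w L hl) => v hv.
    by have /andP [_] := hacc v hv; rewrite nth_mc_input.
  by have [hw _ _ _] := hl; have := OPT_le_wsum hw (legal_wsym hl); lia.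
Qed.

(* The prover and the verifier are finite functions on inputs of bounded
   size, hence computable by lookup-table machines. *)
Lemma mc_scheme_efficient cid (k : nat) :
  mc_seq_efficient cid (Posz k) mc_prover (mc_verifier cid (4 * k)).
Proof.
split.
- have [M [d hM]] := lookup_computable (config_bound cid (4 * k))
                       (fun x => enc_list (mc_prover (dec_config x))) [::].
  exists M, d => adj id w hl; rewrite lez_nat => /(yes_wsum_le hl) hK.
  by have := hM (enc_config (mc_config adj id w)); rewrite size_config_le // enc_configK.
- have [M [d hM]] := lookup_computable (view_bound cid (4 * k))
    (fun x => if dec_list x is sv :: l :: ln then [:: mc_check (4 * k) sv l ln] else [::])
    [:: false].
  exists M, d => sv l ln; have := hM (enc_list (sv :: l :: ln)).
  by rewrite /mc_verifier enc_listK; case: ifP.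
Qed.

(* For [k < 0] there are no yes-instances: the always-rejecting verifier works. *)
Lemma negative_threshold_scheme cid (k : nat) c :
  exists (P : config -> labels) (V : verifierT),
    mc_ADPLS 2 cid (Negz k) (label_bound c) P V /\ mc_seq_efficient cid (Negz k) P V.
Proof.
exists (fun _ => [::]), (fun _ _ _ => false); split; first split.
- by [].
- move=> adj id w [[hn _ _ _] _ _ _] _ L hacc.
  by have := hacc 0 hn.
- split.
  + have [M [d _]] := lookup_computable 0 (fun _ => [::]) [::].
    by exists M, d.
  + have [M [d hM]] := lookup_computable 0 (fun _ => [:: false]) [:: false].
    by exists M, d => sv l ln; have := hM (enc_list (sv :: l :: ln)); case: ifP.
Qed.

Theorem theorem5p26 :
  forall cid : nat, exists c : nat, forall k : int,
    exists (P : config -> labels) (V : verifierT),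
      mc_ADPLS 2 cid k (fun n W => c * (trunc_log 2 n + trunc_log 2 W) + c) P V /\
      mc_seq_efficient cid k P V.
Proof.
move=> cid; exists (6 * cid + 18); case=> k.
- exists mc_prover, (mc_verifier cid (4 * k)).
  by split; [apply: mc_scheme_correct | apply: mc_scheme_efficient].
- exact: (negative_threshold_scheme cid k (6 * cid + 18)).
Qed.
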